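(* Let $L>0$, $V\in C^0([0,L];\mathbb{R})$, $\varepsilon>0$, $q_\varepsilon\in L^\infty(0,L;\mathbb{R})$. For all $E\in\mathbb{R}$ and all $\psi\in H^2(0,L)\cap H^1_0(0,L)$ with $-\varepsilon^2\psi''+(V+q_\varepsilon)\psi=E\psi$, and all $x,y\in[0,L]$, $$\mathscr{E}(x)\le\exp\Big(\frac1\varepsilon|x-y|\big(\|V-E+1\|_{L^\infty(I_{x,y})}+\|q_\varepsilon\|_\infty\big)\Big)\mathscr{E}(y),$$ where $\mathscr{E}(x)=\varepsilon^2|\psi'(x)|^2+|\psi(x)|^2$ and $I_{x,y}$ is the interval between $x$ and $y$. *)

From HB Require Import structures.
From mathcomp Require Import all_boot all_order all_algebra.
From mathcomp Require Import all_classical all_reals all_analysis ess_sup_inf.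
Set Implicit Arguments. Unset Strict Implicit. Unset Printing Implicit Defensive.
Import Order.TTheory GRing.Theory Num.Theory Num.Def.
Import numFieldNormedType.Exports.
Local Open Scope classical_set_scope.
Local Open Scope ring_scope.

Section Defs.
Context {R : realType}.

Definition Linf_norm (A : set R) (f : R -> R) : \bar R :=
  ess_sup (@lebesgue_measure R)
    (fun x => (if `[< A x >] then `|f x| else 0)%:E).

Definition in_Linf (A : set R) (f : R -> R) : Prop :=
  measurable_fun A f /\ (Linf_norm A f < +oo)%E.

(* u is (the continuous representative of) an element of H^2(0,L), with
   classical derivative du (continuous on [0,L]) and weak second derivative
   ddu in L^2(0,L): u, du are absolutely continuous with
   u(x) = u(0) + int_0^x du,  du(x) = du(0) + int_0^x ddu  on [0,L]. *)
Definition H2_rep (L : R) (u du ddu : R -> R) : Prop :=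
  [/\ measurable_fun `[0, L] ddu,
      (@lebesgue_measure R).-integrable `[0, L] (fun x => (ddu x)%:E),
      (@lebesgue_measure R).-integrable `[0, L] (fun x => (ddu x ^+ 2)%:E),
      (forall x, 0 <= x <= L ->
          du x = du 0 + Rintegral (@lebesgue_measure R) `[0, x] ddu) &
      (forall x, 0 <= x <= L ->
          u x = u 0 + Rintegral (@lebesgue_measure R) `[0, x] du)].

Definition H2_H10_rep (L : R) (u du ddu : R -> R) : Prop :=
  [/\ H2_rep L u du ddu, u 0 = 0 & u L = 0].

Definition schrodinger_ae (L eps E : R) (V q u ddu : R -> R) : Prop :=
  {ae (@lebesgue_measure R), forall x, [set` `[0, L]] x ->
      - (eps ^+ 2 * ddu x) + (V x + q x) * u x = E * u x}.

End Defs.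

From HB Require Import structures.
From mathcomp Require Import all_boot all_order all_algebra.
From mathcomp Require Import all_classical all_reals all_analysis ess_sup_inf.
From mathcomp Require Import ring lra.
Import Order.TTheory GRing.Theory Num.Theory Num.Def.
Import numFieldNormedType.Exports.
Local Open Scope classical_set_scope.
Local Open Scope ring_scope.

(* Write psi = u + i w.  As V, q and E are real, u and w solve the same real equation,
   and the energy of psi is the sum of the energies eps^2 u'^2 + u^2 and eps^2 w'^2 + w^2.
   For each of them the equation reads eps^2 u'' + u = (V - E + 1 + q) u, so the
   derivative 2 u' (eps^2 u'' + u) of the energy is at most |V - E + 1 + q| 2 |u'| |u|,
   which by AM-GM is at most eps^-1 |V - E + 1 + q| times the energy.  Gronwall's
   inequality, run forwards or backwards, gives the claim.
   The energy is only absolutely continuous, so the differential inequality is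
   established in the pointwise form [dini_growth], from the integral representations of
   u and u' and the continuity of both; Gronwall's inequality is derived from it by real
   induction against the barrier expR (K t) (F a + eta t). *)

Section Gronwall.
Context {R : realType}.
Implicit Types (F G : R -> R) (a b c d e K : R).

Lemma ler_add_small (x y c d : R) :
  0 < d -> (forall e, 0 < e < d -> x <= y + c * e) -> x <= y.
Proof.
move=> d0 small; apply/ler_addgt0Pr => e e0.
have c1 : 0 < `|c| + 1 by rewrite ltr_wpDl.
set e' := Num.min (d / 2) (e / (`|c| + 1)).
have e'0 : 0 < e' by rewrite lt_min !divr_gt0.
have e'd : e' < d by rewrite gt_min ltr_pdivrMr // ltr_pMr // ltr1n.
have ce' : (`|c| + 1) * e' <= e.
  by rewrite mulrC -ler_pdivlMr // /e' ge_min lexx orbT.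
apply: (le_trans (small e' _)); first by rewrite e'0 e'd.
rewrite lerD2l (le_trans _ ce') // (le_trans (ler_norm _)) //.
by rewrite normrM (gtr0_norm e'0) ler_wpM2r ?(ltW e'0) ?lerDl.
Qed.

Lemma real_induction (P : R -> Prop) a b : a <= b -> P a ->
  (forall c, a < c <= b -> (forall r, a <= r < c -> P r) -> P c) ->
  (forall c, a <= c < b -> (forall r, a <= r <= c -> P r) ->
     exists2 d, 0 < d & forall r, c < r <= b -> r < c + d -> P r) ->
  forall t, a <= t <= b -> P t.
Proof.
move=> ab Pa Pleft Pright.
pose S := [set t | a <= t <= b /\ forall r, a <= r <= t -> P r].
have Sa : S a.
  split=> [|r /andP[ar ra]]; first by rewrite lexx ab.
  by have -> : r = a by apply/le_anti; rewrite ar ra.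
have supS : has_sup S by split; [exists a | exists b => t [/andP[_ ->]]].
set c := sup S.
have ac : a <= c by apply: sup_upper_bound.
have cb : c <= b by apply: ge_sup; [exists a | move=> t [/andP[_ ->]]].
have below r : a <= r < c -> P r.
  move=> /andP[ar rc]; have rc0 : 0 < c - r by rewrite subr_gt0.
  have [t [_ Pt]] := sup_adherent rc0 supS.
  by rewrite opprB addrCA subrr addr0 => /ltW rt; apply: Pt; rewrite ar.
have Pc : P c.
  have [<-//|ac'] := eqVneq a c.
  by apply: Pleft => //; rewrite lt_neqAle ac' ac.
have Sc r : a <= r <= c -> P r.
  move=> /andP[ar]; rewrite le_eqVlt => /predU1P[->//|rc].
  by apply: below; rewrite ar.
suff cb' : c = b by move=> t /andP[ta tb]; apply: Sc; rewrite ta cb'.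
apply/le_anti; rewrite cb leNgt /=; apply/negP => cb2.
have [d d0 Pd] := Pright c (introT andP (conj ac cb2)) Sc.
set t := Num.min b (c + d / 2).
have ct : c < t by rewrite lt_min cb2 ltrDl divr_gt0.
have tb : t <= b by rewrite ge_min lexx.
have St : S t.
  split=> [|r /andP[ar rt]]; first by rewrite tb (le_trans ac (ltW ct)).
  have [rc|cr] := leP r c; first by apply: Sc; rewrite ar rc.
  apply: Pd; first by rewrite cr (le_trans rt tb).
  rewrite (le_lt_trans rt) // (le_lt_trans (y := c + d / 2)) ?ge_min ?lexx ?orbT //.
  by rewrite ltrD2l ltr_pdivrMr // ltr_pMr // ltr1n.
by move: ct; rewrite ltNge sup_upper_bound.
Qed.

Definition dini_growth F K a b := forall s, a <= s <= b -> forall e, 0 < e ->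
  exists2 d, 0 < d & forall t, a <= t <= b -> `|t - s| < d ->
    `|F t - F s| <= (K * F s + e) * `|t - s|.

Lemma dini_growthD F G K a b :
  dini_growth F K a b -> dini_growth G K a b -> dini_growth (F \+ G) K a b.
Proof.
move=> FK GK s sab e e0; have e20 : 0 < e / 2 by rewrite divr_gt0.
have [dF dF0 hF] := FK s sab _ e20; have [dG dG0 hG] := GK s sab _ e20.
exists (Num.min dF dG) => [|t tab]; first by rewrite lt_min dF0 dG0.
rewrite lt_min => /andP[tF tG]; have := hF t tab tF; have := hG t tab tG.
have := ler_normD (F t - F s) (G t - G s).
have -> : (F \+ G) t - (F \+ G) s = F t - F s + (G t - G s) by rewrite /=; ring.
have := normr_ge0 (t - s); rewrite /=; nra.
Qed.

Lemma dini_growth_reflect F K a b :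
  dini_growth F K a b -> dini_growth (F \o -%R) K (- b) (- a).
Proof.
move=> FK s sab e e0.
have sab' : a <= - s <= b by rewrite lerNr lerNl andbC.
have [d d0 hd] := FK _ sab' e e0; exists d => // t tab.
have tab' : a <= - t <= b by rewrite lerNr lerNl andbC.
by rewrite /= -(normrN (t - s)) opprB addrC -[s in - t + s]opprK; apply: hd.
Qed.

Lemma dini_growth_itv F K a b :
  (forall s, a <= s <= b -> forall e, 0 < e -> exists2 d, 0 < d &
    forall m M, a <= m -> m <= s <= M -> M <= b -> M - m < d ->
      `|F M - F m| <= (K * F s + e) * (M - m)) ->
  dini_growth F K a b.
Proof.
move=> FK s sab e e0; have [d d0 hd] := FK s sab e e0; have /andP[a_s sb] := sab.
exists d => // t /andP[a_t tb]; have [st|ts] := leP s t.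
  by rewrite ger0_norm ?subr_ge0 // => /hd; apply; rewrite ?lexx ?st.
rewrite distrC gtr0_norm ?subr_gt0 // => /hd; rewrite distrC; apply => //.
by rewrite lexx ltW.
Qed.

Definition gronwall_barrier K B eta t := expR (K * t) * (B + eta * t).

Lemma gronwall_barrier_ge0 K B eta t :
  0 <= B -> 0 <= eta -> 0 <= t -> 0 <= gronwall_barrier K B eta t.
Proof. by move=> *; rewrite mulr_ge0 ?expR_ge0 ?addr_ge0 ?mulr_ge0. Qed.

(* The barrier is a supersolution of [F' = K * F + eta], in increment form. *)
Lemma gronwall_barrier_step {K B eta t h : R} : 0 <= K -> 0 <= B -> 0 <= eta ->
  0 <= t -> 0 <= h ->
  gronwall_barrier K B eta t + (K * gronwall_barrier K B eta t + eta) * h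
    <= gronwall_barrier K B eta (t + h).
Proof.
move=> K0 B0 eta0 t0 h0; rewrite /gronwall_barrier [K * (t + h)]mulrDr expRD.
set X := expR (K * t); set Y := expR (K * h).
have X1 : 1 <= X by rewrite -expR0 ler_expR mulr_ge0.
have Y1 : 1 + K * h <= Y by apply: expR_ge1Dx.
have Kh0 : 0 <= K * h by rewrite mulr_ge0.
have C0 : 0 <= X * (B + eta * t).
  by rewrite mulr_ge0 ?(le_trans ler01 X1) // addr_ge0 // mulr_ge0.
have etah : eta * h <= Y * X * (eta * h).
  rewrite -[leLHS]mul1r ler_wpM2r ?mulr_ge0 //.
  by rewrite -[1]mulr1 ler_pM // (le_trans _ Y1) // lerDl.
have : (1 + K * h) * (X * (B + eta * t)) <= Y * (X * (B + eta * t)).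
  by rewrite ler_wpM2r.
nra.
Qed.

Lemma gronwall_barrier_le K B eta t t' : 0 <= K -> 0 <= B -> 0 <= eta ->
  0 <= t -> t <= t' -> gronwall_barrier K B eta t <= gronwall_barrier K B eta t'.
Proof.
move=> K0 B0 eta0 t0 tt'; have h0 : 0 <= t' - t by rewrite subr_ge0.
have := gronwall_barrier_step K0 B0 eta0 t0 h0; rewrite [t + _]addrC subrK.
apply: le_trans; rewrite lerDl mulr_ge0 // addr_ge0 // mulr_ge0 //.
exact: gronwall_barrier_ge0.
Qed.

Lemma dini_growth_gronwall F K a b : 0 <= K -> a <= b ->
  (forall t, a <= t <= b -> 0 <= F t) -> dini_growth F K a b ->
  F b <= expR (K * (b - a)) * F a.
Proof.
move=> K0 ab F0 FK; have Fa0 : 0 <= F a by apply: F0; rewrite lexx ab.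
apply: (@ler_add_small _ _ (expR (K * (b - a)) * (b - a)) 1 ltr01).
move=> eta /andP[eta0 _].
pose H t := gronwall_barrier K (F a) eta (t - a).
have HE : H b = expR (K * (b - a)) * F a + expR (K * (b - a)) * (b - a) * eta.
  by rewrite /H /gronwall_barrier; ring.
have Hstep r t : a <= r -> r <= t -> H r + (K * H r + eta) * (t - r) <= H t.
  move=> ar rt; rewrite /H (_ : t - a = (r - a) + (t - r)); last by ring.
  by apply: gronwall_barrier_step; rewrite ?subr_ge0 // ltW.
have Hle r t : a <= r -> r <= t -> H r <= H t.
  by move=> ar rt; apply: gronwall_barrier_le; rewrite ?subr_ge0 ?lerD2r // ltW.
rewrite -HE; apply: (@real_induction (fun t => F t <= H t) a b) => //.
- by rewrite /H /gronwall_barrier subrr !mulr0 expR0 addr0 mul1r.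
- move=> c /andP[ac cb] IH; have cab : a <= c <= b by rewrite (ltW ac) cb.
  have [d d0 hd] := FK c cab 1 ltr01.
  apply: (@ler_add_small _ _ (K * F c + 1) (Num.min d (c - a))).
    by rewrite lt_min d0 subr_gt0.
  move=> e /andP[e0]; rewrite lt_min => /andP[ed eca].
  have rab : a <= c - e <= b.
    by rewrite lerBrDr -lerBrDl ltW //= (le_trans _ cb) // gerBl ltW.
  have := hd (c - e) rab; rewrite addrAC subrr add0r normrN (gtr0_norm e0).
  move=> /(_ ed); rewrite ler_norml => /andP[+ _].
  have /andP[ar _] := rab; have ce : c - e < c by rewrite ltrBlDr ltrDl.
  have := Hle _ _ ar (ltW ce); have /IH : a <= c - e < c by rewrite ar ce.
  lra.
- move=> c /andP[ac cb] IH; have cab : a <= c <= b by rewrite ac ltW.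
  have [d d0 hd] := FK c cab eta eta0; exists d => // r /andP[cr rb] rcd.
  have rab : a <= r <= b by rewrite rb (le_trans ac (ltW cr)).
  have := hd r rab; rewrite gtr0_norm ?subr_gt0 // ltrBlDl => /(_ rcd).
  rewrite ler_norml => /andP[_ Fr].
  have Fc : F c <= H c by apply: IH; rewrite ac lexx.
  have KFc : K * F c <= K * H c by rewrite ler_wpM2l.
  have rc0 : 0 < r - c by rewrite subr_gt0.
  have := Hstep c r ac (ltW cr); nra.
- by rewrite ab lexx.
Qed.

Lemma dini_growth_gronwall_rev F K a b : 0 <= K -> a <= b ->
  (forall t, a <= t <= b -> 0 <= F t) -> dini_growth F K a b ->
  F a <= expR (K * (b - a)) * F b.
Proof.
move=> K0 ab F0 /dini_growth_reflect FK.
have := dini_growth_gronwall _ _ _ _ K0 _ _ FK; rewrite /= !opprK addrC.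
apply; first by rewrite lerN2.
by move=> t; rewrite lerNr lerNl andbC => /F0.
Qed.

End Gronwall.

Section Algebra.
Context {R : realFieldType}.

Lemma amgm_scaled (eps x y : R) : 0 < eps ->
  2 * (`|x| * `|y|) <= eps^-1 * (eps ^+ 2 * y ^+ 2 + x ^+ 2).
Proof.
move=> eps0; rewrite ler_pdivlMl // -(real_normK (num_real x)) -(real_normK (num_real y)).
have := sqr_ge0 (eps * `|y| - `|x|); rewrite sqrrB; nra.
Qed.

Lemma cross_term_le (x y x1 x2 x3 y1 y2 y3 rho : R) : rho <= 1 ->
  `|x1 - x| <= rho -> `|x2 - x| <= rho -> `|x3 - x| <= rho ->
  `|y1 - y| <= rho -> `|y2 - y| <= rho -> `|y3 - y| <= rho ->
  `|(x2 + x3) * y1 - (y2 + y3) * x1| <= 4 * rho * (`|x| + `|y| + 1).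
Proof.
set a1 := x1 - x; set a2 := x2 - x; set a3 := x3 - x.
set b1 := y1 - y; set b2 := y2 - y; set b3 := y3 - y.
move=> rho1 ha1 ha2 ha3 hb1 hb2 hb3.
have -> : (x2 + x3) * y1 - (y2 + y3) * x1 =
    x * (b1 + b1 - b2 - b3) + y * (a2 + a3 - a1 - a1) + ((a2 + a3) * b1 - (b2 + b3) * a1).
  by rewrite /a1 /a2 /a3 /b1 /b2 /b3; ring.
have sum4 (c1 c2 c3 c4 : R) : `|c1 + c2 - c3 - c4| <= `|c1| + `|c2| + `|c3| + `|c4|.
  rewrite (le_trans (ler_normB _ _)) // lerD2r.
  by rewrite (le_trans (ler_normB _ _)) // lerD2r ler_normD.
have rho0 : 0 <= rho by rewrite (le_trans _ ha1).
have hx : `|x * (b1 + b1 - b2 - b3)| <= `|x| * (4 * rho).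
  by rewrite normrM ler_wpM2l // (le_trans (sum4 _ _ _ _)) //; lra.
have hy : `|y * (a2 + a3 - a1 - a1)| <= `|y| * (4 * rho).
  by rewrite normrM ler_wpM2l // (le_trans (sum4 _ _ _ _)) //; lra.
have hab : `|(a2 + a3) * b1 - (b2 + b3) * a1| <= 4 * rho.
  rewrite (le_trans (ler_normB _ _)) // !normrM.
  have := ler_normD a2 a3; have := ler_normD b2 b3.
  have := normr_ge0 (a2 + a3); have := normr_ge0 (b2 + b3); nra.
have := ler_normD (x * (b1 + b1 - b2 - b3) + y * (a2 + a3 - a1 - a1))
  ((a2 + a3) * b1 - (b2 + b3) * a1).
have := ler_normD (x * (b1 + b1 - b2 - b3)) (y * (a2 + a3 - a1 - a1)).
lra.
Qed.

End Algebra.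

Section Integrals.
Context {R : realType}.
Notation mu := (@lebesgue_measure R).

Lemma within_continuous_dist_lt {A : set R} {f : R -> R} {x : R} :
  {within A, continuous f} -> A x -> forall e, 0 < e ->
  exists2 d, 0 < d & forall y, A y -> `|y - x| < d -> `|f y - f x| < e.
Proof.
move=> /subspace_continuousP cf Ax e e0.
have /cvgrPdist_lt /(_ e e0) := cf x Ax.
rewrite near_withinE => /nbhs_ballP [d d0 hd].
by exists d => // y Ay yx; rewrite distrC; apply: hd => //; rewrite /ball /= distrC.
Qed.

Lemma continuous_itv_bounded {a b : R} {f : R -> R} :
  {within `[a, b], continuous f} -> exists B, forall t, a <= t <= b -> `|f t| <= B.
Proof.
move=> cf; have /compact_bounded[M [_ Mf]] := continuous_compact cf (@segment_compact _ a b).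
exists (M + 1) => t tab; apply: (Mf (M + 1)); first by rewrite ltrDl.
by exists t => //=; rewrite in_itv.
Qed.

Lemma integral_rep_continuous {L : R} {f g : R -> R} : 0 <= L ->
  mu.-integrable `[0, L] (EFin \o f) ->
  (forall x, 0 <= x <= L -> g x = g 0 + Rintegral mu `[0, x] f) ->
  {within `[0, L], continuous g}.
Proof.
move=> L0 intf rep.
apply: (@subspace_eq_continuous _ _ _ (fun x => g 0 + parameterized_integral mu 0 x f)).
  by move=> x; rewrite inE /= in_itv /= => /rep.
apply: within_continuousD; last exact: parameterized_integral_continuous.
by apply: continuous_subspaceT => x; apply: cvg_cst.
Qed.

Lemma integral_rep_sub {L m M : R} {f g : R -> R} : 0 <= m -> m <= M -> M <= L ->
  mu.-integrable `[0, L] (EFin \o f) ->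
  (forall x, 0 <= x <= L -> g x = g 0 + Rintegral mu `[0, x] f) ->
  g M - g m = Rintegral mu `[m, M] f.
Proof.
move=> m0 mM ML intf rep.
rewrite (rep M) ?(le_trans m0 mM) // (rep m) ?m0 ?(le_trans mM ML) //.
rewrite opprD addrACA subrr add0r.
have intM : mu.-integrable `[0, M] (EFin \o f).
  by apply: integrableS intf => //; apply: subset_itvl; rewrite bnd_simp.
rewrite Rintegral_itvB ?bnd_simp // Rintegral_itv_obnd_cbnd //.
by apply: integrableS intM => //; apply: subset_itvr; rewrite bnd_simp.
Qed.

Lemma normr_Rintegral_le_ae (m M c : R) (f : R -> R) : m <= M -> 0 <= c ->
  mu.-integrable `[m, M] (EFin \o f) ->
  {ae mu, forall r, [set` `[m, M]] r -> `|f r| <= c} ->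
  `|Rintegral mu `[m, M] f| <= c * (M - m).
Proof.
move=> mM c0 intf fc; rewrite (le_trans (le_normr_Rintegral _ _)) //.
have intn : mu.-integrable `[m, M] (EFin \o (normr \o f)) by apply: integrable_norm.
rewrite -lee_fin /Rintegral fineK; last exact: integrable_fin_num.
apply: (@le_trans _ _ (\int[mu]_(x in `[m, M]) (cst c%:E) x)%E).
  by apply: ae_ge0_le_integral => //; case/integrableP: intn.
rewrite integral_cst // [X in (_ * X)%E]lebesgue_measure_itv /=.
move: mM; rewrite le_eqVlt => /predU1P[->|mM]; first by rewrite ltxx subrr mulr0 mule0.
by rewrite lte_fin mM -EFinB -EFinM.
Qed.

End Integrals.

Section Linf.
Context {R : realType}.
Notation mu := (@lebesgue_measure R).
Implicit Types (A : set R) (f : R -> R).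

Lemma Linf_norm_fine_ge0 A f : 0 <= fine (Linf_norm A f).
Proof.
have mu_gt0 : (0 < mu [set: R])%E.
  by rewrite -set_itvNyy lebesgue_measure_itv /= ltry.
have := @ess_sup_gee _ _ _ mu
  (fun x => (if `[< A x >] then `|f x| else 0)%:E) 0 mu_gt0.
rewrite -/(Linf_norm A f).
case: (Linf_norm A f) => [r| |] //= h; rewrite -lee_fin; apply: h.
by apply: nearW => x; case: ifP.
Qed.

Lemma Linf_norm_bounded A f (B : R) :
  (forall r, A r -> `|f r| <= B) -> (Linf_norm A f < +oo)%E.
Proof.
move=> fB; apply: (@le_lt_trans _ _ `|B|%:E); last exact: ltry.
apply/ess_supP; apply: nearW => x; case: asboolP => Ax; rewrite lee_fin //.
exact: le_trans (fB x Ax) (ler_norm B).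
Qed.

Lemma Linf_norm_ae_le {A f} : (Linf_norm A f < +oo)%E ->
  {ae mu, forall r, A r -> `|f r| <= fine (Linf_norm A f)}.
Proof.
move=> f_fin; have := ess_sup_ge mu
  (fun x => (if `[< A x >] then `|f x| else 0)%:E).
rewrite -/(Linf_norm A f); apply: filterS => x fx Ax.
move: fx f_fin; rewrite asboolT //.
by case: (Linf_norm A f) => [r h _| //| h] /=; [rewrite -lee_fin | rewrite leeNy_eq in h].
Qed.

End Linf.

Definition energy {R : ringType} (eps : R) (u du : R -> R) (t : R) :=
  eps ^+ 2 * du t ^+ 2 + u t ^+ 2.

Section Energy.
Context {R : realType}.
Notation mu := (@lebesgue_measure R).
Variables (L eps : R) (u du ddu : R -> R).
Hypotheses (L_ge0 : 0 <= L) (eps_gt0 : 0 < eps) (u_H2 : H2_rep L u du ddu).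

Let ddu_int : mu.-integrable `[0, L] (EFin \o ddu).
Proof. by case: u_H2. Qed.

Let du_rep x : 0 <= x <= L -> du x = du 0 + Rintegral mu `[0, x] ddu.
Proof. by case: u_H2 => _ _ _ /(_ x). Qed.

Let u_rep x : 0 <= x <= L -> u x = u 0 + Rintegral mu `[0, x] du.
Proof. by case: u_H2 => _ _ _ _ /(_ x). Qed.

Let du_cont : {within `[0, L], continuous du}.
Proof. exact: integral_rep_continuous L_ge0 ddu_int du_rep. Qed.

Let du_int : mu.-integrable `[0, L] (EFin \o du).
Proof. exact: continuous_compact_integrable (@segment_compact _ 0 L) du_cont. Qed.

Let u_cont : {within `[0, L], continuous u}.
Proof. exact: integral_rep_continuous L_ge0 du_int u_rep. Qed.

Let u_int : mu.-integrable `[0, L] (EFin \o u).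
Proof. exact: continuous_compact_integrable (@segment_compact _ 0 L) u_cont. Qed.

Let integrable_sub {m M : R} : 0 <= m -> M <= L ->
  [/\ mu.-integrable `[m, M] (EFin \o ddu), mu.-integrable `[m, M] (EFin \o du)
    & mu.-integrable `[m, M] (EFin \o u)].
Proof.
move=> m0 ML; have sub : [set` `[m, M]] `<=` [set` `[0, L]].
  by apply: subset_itv; rewrite bnd_simp.
by split; [apply: integrableS ddu_int | apply: integrableS du_int | apply: integrableS u_int].
Qed.

(* The first integrand is the one the equation controls; the second vanishes when [u] and
   [du] are frozen at one point, so it is small on short intervals. *)
Lemma energy_sub m M : 0 <= m -> m <= M -> M <= L ->
  energy eps u du M - energy eps u du m =
    Rintegral mu `[m, M] (fun r => eps ^+ 2 * ddu r + u r) * (du M + du m)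
    + Rintegral mu `[m, M] (fun r => (u M + u m) * du r - (du M + du m) * u r).
Proof.
move=> m0 mM ML.
have [ddu_i du_i u_i] := integrable_sub m0 ML.
have Zl k f : mu.-integrable `[m, M] (EFin \o f) ->
    mu.-integrable `[m, M] (EFin \o (fun r => k * f r)) by exact: integrableZl.
rewrite RintegralD ?RintegralB ?RintegralZl //; try exact: Zl.
rewrite -(integral_rep_sub m0 mM ML ddu_int du_rep).
rewrite -(integral_rep_sub m0 mM ML du_int u_rep).
by rewrite /energy; ring.
Qed.

Lemma energy_sub_le {K x y rho m M : R} : 0 <= K -> 0 <= rho <= 1 ->
  0 <= m -> m <= M -> M <= L ->
  (forall r, m <= r <= M -> `|u r - x| <= rho /\ `|du r - y| <= rho) ->
  {ae mu, forall r, [set` `[m, M]] r -> `|eps ^+ 2 * ddu r + u r| <= K * `|u r|} ->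
  `|energy eps u du M - energy eps u du m|
    <= (2 * K * (`|x| * `|y|) + rho * (2 * K + 4) * (`|x| + `|y| + 1)) * (M - m).
Proof.
move=> K0 /andP[rho0 rho1] m0 mM ML close Kbound; rewrite energy_sub //.
have [ddu_i du_i u_i] := integrable_sub m0 ML.
have [[uMx duMy] [umx dumy]] : (`|u M - x| <= rho /\ `|du M - y| <= rho) /\
    (`|u m - x| <= rho /\ `|du m - y| <= rho) by split; apply: close; rewrite ?lexx ?mM.
have u_le r : m <= r <= M -> `|u r| <= `|x| + rho.
  move=> /close[ur _]; have := ler_normD x (u r - x); rewrite addrC subrK; lra.
have main_le : `|Rintegral mu `[m, M] (fun r => eps ^+ 2 * ddu r + u r)|
    <= K * (`|x| + rho) * (M - m).
  apply: normr_Rintegral_le_ae; rewrite ?mulr_ge0 ?addr_ge0 //.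
    exact: integrableD (integrableZl _ _ ddu_i) u_i.
  move: Kbound; apply: (@filterS _ _ (ae_filter_ringOfSetsType mu)) => r Kr rmM.
  apply: (le_trans (Kr rmM)).
  by rewrite ler_wpM2l // u_le.
have cross_le :
    `|Rintegral mu `[m, M] (fun r => (u M + u m) * du r - (du M + du m) * u r)|
    <= 4 * rho * (`|x| + `|y| + 1) * (M - m).
  apply: normr_Rintegral_le_ae; rewrite ?mulr_ge0 ?addr_ge0 //.
    exact: integrableB (integrableZl _ _ du_i) (integrableZl _ _ u_i).
  apply: aeW => r /=; rewrite in_itv /= => /close[ur dur].
  exact: cross_term_le.
have P_le : `|du M + du m| <= 2 * `|y| + 2 * rho.
  have -> : du M + du m = 2 * y + ((du M - y) + (du m - y)) by ring.
  have := ler_normD (2 * y) ((du M - y) + (du m - y)); have := ler_normD (du M - y) (du m - y).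
  rewrite normrM (ger0_norm (ler0n _ 2)); lra.
set A := Rintegral _ _ _ in main_le *; set C := Rintegral _ _ _ in cross_le *.
have Mm0 : 0 <= M - m by rewrite subr_ge0.
have AP_le : `|A * (du M + du m)| <= K * (`|x| + rho) * (M - m) * (2 * `|y| + 2 * rho).
  by rewrite normrM ler_pM.
have prod_le : (`|x| + rho) * (2 * `|y| + 2 * rho)
    <= 2 * (`|x| * `|y|) + 2 * rho * (`|x| + `|y| + 1).
  by have := normr_ge0 x; have := normr_ge0 y; nra.
have := ler_wpM2l (mulr_ge0 K0 Mm0) prod_le.
have := ler_normD (A * (du M + du m)) C; nra.
Qed.

Lemma energy_dini_growth K a b : 0 <= K -> 0 <= a -> b <= L ->
  {ae mu, forall r, [set` `[a, b]] r -> `|eps ^+ 2 * ddu r + u r| <= K * `|u r|} ->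
  dini_growth (energy eps u du) (eps^-1 * K) a b.
Proof.
move=> K0 a0 bL Kbound; apply: dini_growth_itv => s /andP[a_s sb] e e0.
set x := u s; set y := du s; set N := `|x| + `|y| + 1.
have N0 : 0 < N by rewrite ltr_wpDl ?addr_ge0.
have KN0 : 0 < (2 * K + 4) * N by rewrite mulr_gt0 // ltr_wpDl ?mulr_ge0.
set rho := Num.min 1 (e / ((2 * K + 4) * N)).
have rho0 : 0 < rho by rewrite lt_min ltr01 divr_gt0.
have rho1 : rho <= 1 by rewrite ge_min lexx.
have rho_e : rho * (2 * K + 4) * N <= e.
  by rewrite -mulrA mulrC -ler_pdivlMl // /rho ge_min mulrC lexx orbT.
have s0L : [set` `[0, L]] s by rewrite /= in_itv /= (le_trans a0) // (le_trans sb).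
have [d1 d10 hd1] := within_continuous_dist_lt u_cont s0L _ rho0.
have [d2 d20 hd2] := within_continuous_dist_lt du_cont s0L _ rho0.
exists (Num.min d1 d2) => [|m M a_m /andP[ms sM] Mb Mmd]; first by rewrite lt_min d10 d20.
have close r : m <= r <= M -> `|u r - x| <= rho /\ `|du r - y| <= rho.
  move=> /andP[mr rM].
  have r0L : [set` `[0, L]] r.
    by rewrite /= in_itv /= (le_trans a0 (le_trans a_m mr)) (le_trans rM (le_trans Mb bL)).
  have : `|r - s| < Num.min d1 d2.
    apply: le_lt_trans Mmd; rewrite ler_norml; apply/andP; split; lra.
  by rewrite lt_min => /andP[/(hd1 _ r0L) ? /(hd2 _ r0L) ?]; split; apply: ltW.
have Mm_bound : {ae mu, forall r, [set` `[m, M]] r ->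
    `|eps ^+ 2 * ddu r + u r| <= K * `|u r|}.
  move: Kbound; apply: (@filterS _ _ (ae_filter_ringOfSetsType mu)) => r + rmM.
  apply; move: rmM; rewrite /= !in_itv /= => /andP[mr rM].
  by rewrite (le_trans a_m mr) (le_trans rM Mb).
have m0 : 0 <= m by rewrite (le_trans a0).
have mM : m <= M by rewrite (le_trans ms).
apply: (le_trans (energy_sub_le K0 _ m0 mM _ close Mm_bound)).
- by rewrite ltW.
- by rewrite (le_trans Mb).
rewrite ler_wpM2r ?subr_ge0 // lerD // [2 * K]mulrC [eps^-1 * K]mulrC -!mulrA.
by rewrite ler_wpM2l // amgm_scaled.
Qed.

End Energy.

Section Schrodinger.
Context {R : realType}.
Notation mu := (@lebesgue_measure R).
Variables (L eps E : R) (V q : R -> R).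
Hypotheses (eps_gt0 : 0 < eps) (V_cont : {within `[0, L], continuous V})
  (q_Linf : in_Linf `[0, L] q).

Lemma schrodinger_energy_dini_growth {u du ddu : R -> R} {a b : R} :
  0 <= a -> a <= b -> b <= L ->
  H2_rep L u du ddu -> schrodinger_ae L eps E V q u ddu ->
  dini_growth (energy eps u du)
    (eps^-1 * (fine (Linf_norm `[a, b] (fun t => V t - E + 1))
               + fine (Linf_norm `[0, L] q))) a b.
Proof.
move=> a0 ab bL u_H2 u_sol.
set W := fun t => V t - E + 1; set M1 := fine _; set M2 := fine _.
have ab_sub r : [set` `[a, b]] r -> [set` `[0, L]] r.
  by rewrite /= !in_itv /= => /andP[ar rb]; rewrite (le_trans a0 ar) (le_trans rb bL).
have W_fin : (Linf_norm `[a, b] W < +oo)%E.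
  have [B VB] := continuous_itv_bounded V_cont.
  apply: (@Linf_norm_bounded _ _ _ (B + `|E| + 1)) => r /ab_sub; rewrite /= in_itv /=.
  move=> /VB; have := ler_normB (V r) E; have := ler_normD (V r - E) 1.
  by rewrite normr1 /W; lra.
have bound : {ae mu, forall r, [set` `[a, b]] r ->
    `|eps ^+ 2 * ddu r + u r| <= (M1 + M2) * `|u r|}.
  move: u_sol (Linf_norm_ae_le W_fin) (Linf_norm_ae_le q_Linf.2).
  apply: (filterS3 (ae_filter_ringOfSetsType mu)) => r u_eq W_le q_le rab.
  have -> : eps ^+ 2 * ddu r + u r = (W r + q r) * u r.
    by move: (u_eq (ab_sub r rab)); rewrite /W; lra.
  rewrite normrM ler_wpM2r // (le_trans (ler_normD _ _)) // lerD //.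
    exact: W_le.
  exact/q_le/ab_sub.
have L0 : 0 <= L by rewrite (le_trans a0) // (le_trans ab).
have M0 : 0 <= M1 + M2 by rewrite addr_ge0 // Linf_norm_fine_ge0.
exact: (@energy_dini_growth _ L eps u du ddu L0 eps_gt0 u_H2 _ a b M0 a0 bL bound).
Qed.

End Schrodinger.

Theorem lemma2p6 (R : realType) (L : R) (V : R -> R) (eps : R) (q : R -> R)
  (hL : 0 < L) (hV : {within `[0, L], continuous V}) (heps : 0 < eps)
  (hq : in_Linf `[0, L] q) :
  forall (E : R) (u du ddu w dw ddw : R -> R),
    H2_H10_rep L u du ddu -> H2_H10_rep L w dw ddw ->
    schrodinger_ae L eps E V q u ddu -> schrodinger_ae L eps E V q w ddw ->
    let En := fun x => eps ^+ 2 * (du x ^+ 2 + dw x ^+ 2) + (u x ^+ 2 + w x ^+ 2) in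
    forall x y : R, 0 <= x <= L -> 0 <= y <= L ->
      En x <= expR (eps^-1 * `|x - y| *
                (fine (Linf_norm `[Num.min x y, Num.max x y] (fun t => V t - E + 1))
                 + fine (Linf_norm `[0, L] q))) * En y.
Proof.
move=> E u du ddu w dw ddw [u_H2 _ _] [w_H2 _ _] u_sol w_sol En x y.
move=> /andP[x0 xL] /andP[y0 yL].
pose K a b := eps^-1 * (fine (Linf_norm `[a, b] (fun t => V t - E + 1))
  + fine (Linf_norm `[0, L] q)).
have K_ge0 a b : 0 <= K a b.
  by apply: mulr_ge0; rewrite ?invr_ge0 ?(ltW heps) // addr_ge0 // Linf_norm_fine_ge0.
have En_ge0 t : 0 <= En t.
  by rewrite /En; apply: addr_ge0; [apply: mulr_ge0 |]; rewrite ?sqr_ge0 ?addr_ge0 ?sqr_ge0.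
have En_growth a b : 0 <= a -> a <= b -> b <= L -> dini_growth En (K a b) a b.
  move=> a0 ab bL; rewrite /K; have -> : En = energy eps u du \+ energy eps w dw.
    by apply/funext => t; rewrite /En /energy /=; ring.
  by apply: dini_growthD;
    [move: u_H2 u_sol | move: w_H2 w_sol]; apply: schrodinger_energy_dini_growth.
have [xy|yx] := leP x y.
- rewrite distrC ger0_norm ?subr_ge0 // mulrAC.
  by apply: dini_growth_gronwall_rev => //; [exact: (K_ge0 x y) | exact: En_growth].
- rewrite ger0_norm ?subr_ge0 ?(ltW yx) // mulrAC.
  by apply: dini_growth_gronwall (ltW yx) _ _ => //;
    [exact: (K_ge0 y x) | exact: (En_growth y x y0 (ltW yx) xL)].
Qed.
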